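(* Assume the setting described in the context. Let $\ldots\sigma_1\xrightarrow{u_1}\sigma_2\xrightarrow{u_2}\cdots\sigma_k\xrightarrow{u_k}\sigma_{k+1}\ldots$ be (a segment of) a walk with $k\ge1$. Suppose that at least one of the following holds: (a) $u_k\notin F_{\sigma_1}$; (b) $k\ge2$ and $u_1=u_k$. Then there exists $i\in[k-1]$ with $u_i\sim u_k$.
   Context: Setting: $\Omega$ is a finite set and $F$ a finite set of flaws, each a nonempty subset of $\Omega$; $F_\sigma=\{f:\sigma\in f\}$. For $\sigma\in\Omega$ and $f\in F_\sigma$ there is a probability distribution $\rho(\cdot\mid f,\sigma)$ with support $A(f,\sigma)$. A walk is a sequence of steps $\sigma\xrightarrow{f}\sigma'$ with $f\in F_\sigma$ and $\sigma'\in A(f,\sigma)$, each step starting at the state where the previous one ended. $\sim$ is a symmetric relation on $F$ (loops allowed), with $\Gamma(f)=\{g:f\sim g\}$. It is assumed that $(F,\sim)$ is a potential causality graph: for every step $\sigma\xrightarrow{f}\sigma'$, $F_{\sigma'}\subseteq(F_\sigma\setminus\{f\})\cup\Gamma(f)$. *)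

From mathcomp Require Import all_boot all_order all_algebra.
Set Implicit Arguments. Unset Strict Implicit. Unset Printing Implicit Defensive.
Import Order.TTheory GRing.Theory Num.Theory.
Local Open Scope ring_scope.

(* Setting: Omega a finite type of states; F : {set {set Omega}} the finite
   set of flaws (each a nonempty subset of Omega); rho f sigma sigma' the
   probability rho(sigma' | f, sigma), with values in a real field R. *)

Section Setting.
Variables (Omega : finType) (R : realFieldType).

Definition flaws_nonempty (F : {set {set Omega}}) : Prop :=
  forall f, f \in F -> f != set0.

Definition flaws_at (F : {set {set Omega}}) (s : Omega) : {set {set Omega}} :=
  [set f in F | s \in f].

Definition is_rho (F : {set {set Omega}})
    (rho : {set Omega} -> Omega -> Omega -> R) : Prop :=
  forall s f, f \in flaws_at F s ->
    (forall s', 0 <= rho f s s') /\ \sum_(s' : Omega) rho f s s' = 1.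

Definition actions (rho : {set Omega} -> Omega -> Omega -> R)
    (f : {set Omega}) (s : Omega) : {set Omega} :=
  [set s' | rho f s s' != 0].

Definition step (F : {set {set Omega}}) (rho : {set Omega} -> Omega -> Omega -> R)
    (s : Omega) (f : {set Omega}) (s' : Omega) : bool :=
  (f \in flaws_at F s) && (s' \in actions rho f s).

Definition Gamma (F : {set {set Omega}}) (sim : rel {set Omega})
    (f : {set Omega}) : {set {set Omega}} :=
  [set g in F | sim f g].

Definition potential_causality_graph (F : {set {set Omega}})
    (rho : {set Omega} -> Omega -> Omega -> R) (sim : rel {set Omega}) : Prop :=
  (forall f g, f \in F -> g \in F -> sim f g = sim g f) /\
  (forall s f s', step F rho s f s' ->
     flaws_at F s' \subset (flaws_at F s :\ f) :|: Gamma F sim f).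

Definition walk_segment (F : {set {set Omega}})
    (rho : {set Omega} -> Omega -> Omega -> R)
    (k : nat) (sigma : nat -> Omega) (u : nat -> {set Omega}) : Prop :=
  forall i, (1 <= i <= k)%N -> step F rho (sigma i) (u i) (sigma i.+1).

End Setting.

(** Follow the flaw [u k] backwards along the walk.  By the potential
    causality property, a flaw present after a step [s --f--> s'] was either
    already present before it and differs from [f], or is a neighbour of [f].
    So either some earlier [u i] is a neighbour of [u k], or [u k] is present
    at [sigma 1] and no earlier step addresses it; the latter contradicts
    both (a) and (b). *)

From mathcomp Require Import all_boot all_order all_algebra.
From mathcomp Require Import zify.
Set Implicit Arguments.
Local Open Scope ring_scope.

Section Walk.
Variables (Omega : finType) (R : realFieldType).
Variables (F : {set {set Omega}}) (rho : {set Omega} -> Omega -> Omega -> R).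
Variable sim : rel {set Omega}.
Hypothesis hpcg : potential_causality_graph F rho sim.

Lemma flaw_after_step {s f s' g} :
  step F rho s f s' -> g \in flaws_at F s' ->
  (g \in flaws_at F s /\ f != g) \/ sim f g.
Proof.
move=> hst /(subsetP (hpcg.2 _ _ _ hst)); rewrite !inE.
case/orP=> [/andP[gf gs]|/andP[_ fg]]; last by right.
by left; rewrite eq_sym.
Qed.

Variables (k : nat) (sigma : nat -> Omega) (u : nat -> {set Omega}).
Hypothesis hwalk : walk_segment F rho k sigma u.

Lemma flaw_traces_back {g j n} :
  (1 <= j <= n)%N -> (n <= k.+1)%N -> g \in flaws_at F (sigma n) ->
  (exists2 i, (j <= i < n)%N & sim (u i) g) \/
  (g \in flaws_at F (sigma j) /\ forall i, (j <= i < n)%N -> u i != g).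
Proof.
move=> /andP[j1 jn] nk gn; rewrite -(subKn jn).
elim: (n - j)%N (leq_sub2l n j1) => [|d IH] dn.
  by right; rewrite subn0; split=> // i; lia.
have [[i ri sim_ig]|[gd hd]] := IH (ltnW dn).
  by left; exists i => //; lia.
have hst : step F rho (sigma (n - d.+1)) (u (n - d.+1)) (sigma (n - d)).
  have -> : (n - d = (n - d.+1).+1)%N by lia.
  by apply: hwalk; lia.
have [[gs ne]|sim_ig] := flaw_after_step hst gd; last first.
  by left; exists (n - d.+1)%N => //; lia.
right; split=> // i ri.
have [->|ie] := eqVneq i (n - d.+1)%N; first exact: ne.
by apply: hd; lia.
Qed.

End Walk.

Theorem lemma2 (Omega : finType) (R : realFieldType)
    (F : {set {set Omega}}) (rho : {set Omega} -> Omega -> Omega -> R)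
    (sim : rel {set Omega})
    (hF : flaws_nonempty F) (hrho : is_rho F rho)
    (hpcg : potential_causality_graph F rho sim)
    (k : nat) (sigma : nat -> Omega) (u : nat -> {set Omega})
    (hk : (1 <= k)%N) (hwalk : walk_segment F rho k sigma u)
    (hab : u k \notin flaws_at F (sigma 1%N) \/ ((2 <= k)%N /\ u 1%N = u k)) :
  exists i : nat, [/\ (1 <= i)%N, (i <= k.-1)%N & sim (u i) (u k)].
Proof.
have uk_at_k : u k \in flaws_at F (sigma k).
  by have /andP[] := hwalk k (ltac:(lia) : (1 <= k <= k)%N).
have [[i ri sim_ik]|[uk_at_1 unaddressed]] :=
  flaw_traces_back hpcg hwalk (ltac:(lia) : (1 <= 1 <= k)%N) (leqnSn k) uk_at_k.
  by exists i; split=> //; lia.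
case: hab => [/negP //|[k2 u1k]].
by have := unaddressed 1%N (ltac:(lia)); rewrite u1k eqxx.
Qed.
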